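(* Let $\rho\in(0,1)$. If $\mathbf a=(x_1,y_1)\in\mathbb R^2$ satisfies $\mathbf a\neq\mathbf a^*$ and $K(\mathbf a,\mathbf b^* )\le 0$, then $x_1+y_1<0$ and either $x_1^2+y_1^2<2x_2^{*2}$ or $x_1+y_1\le -2x_2^*$.
   Context: Standing setup. Fix $\sigma_x,\sigma_y>0$ and $\rho\in(-1,1)$, and let $(\xi,\eta)$ be a bivariate normal random vector with mean $(0,0)$ and covariance matrix $\Sigma=\begin{pmatrix}\sigma_x^2&\rho\sigma_x\sigma_y\\ \rho\sigma_x\sigma_y&\sigma_y^2\end{pmatrix}$. Player I (the minimizer) chooses $\mathbf a=(x_1,y_1)\in\mathbb R^2$ and Player II (the maximizer) chooses $\mathbf b=(x_2,y_2)\in\mathbb R^2$. Let $C_1(\mathbf a,\mathbf b)=\{(x,y):(x_1-x)^2+(y_1-y)^2<(x_2-x)^2+(y_2-y)^2\}$ and $C_2(\mathbf a,\mathbf b)=\{(x,y):(x_1-x)^2+(y_1-y)^2>(x_2-x)^2+(y_2-y)^2\}$. The payoff to Player II (paid by Player I) is $K(\mathbf a,\mathbf b)=x_1+y_1$ if $\mathbf a=\mathbf b$, and $K(\mathbf a,\mathbf b)=(x_1+y_1)\,P((\xi,\eta)\in C_1(\mathbf a,\mathbf b))+(x_2+y_2)\,P((\xi,\eta)\in C_2(\mathbf a,\mathbf b))$ if $\mathbf a\neq\mathbf b$. For $\mathbf a=(x,y)$ write $-\mathbf a=(-x,-y)$. Let $x_2^*=\frac{\sqrt{2\pi(\sigma_x^2+2\rho\sigma_x\sigma_y+\sigma_y^2)}}{4}$,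 $\mathbf b^*=(x_2^*,x_2^* )$ and $\mathbf a^*=(-x_2^*,-x_2^* )$. *)

From Stdlib Require Import Reals Lra ClassicalDescription ClassicalEpsilon.
Open Scope R_scope.

(* Density of the centred bivariate normal law with covariance
   [[sx^2, rho sx sy],[rho sx sy, sy^2]]. *)
Definition bvn_density (sx sy rho : R) (x y : R) : R :=
  / (2 * PI * sx * sy * sqrt (1 - rho ^ 2)) *
  exp (- / (2 * (1 - rho ^ 2)) *
       (x ^ 2 / sx ^ 2 - 2 * rho * x * y / (sx * sy) + y ^ 2 / sy ^ 2)).

Definition improper_integral_R (g : R -> R) (l : R) : Prop :=
  forall eps : R, 0 < eps ->
    exists M : R, 0 < M /\
      forall a b : R, a <= - M -> M <= b ->
        exists pr : Riemann_integrable g a b, Rabs (RiemannInt pr - l) < eps.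

Definition indic (C : R -> R -> Prop) (x y : R) : R :=
  if excluded_middle_informative (C x y) then 1 else 0.

(* P((xi,eta) \in C), computed as the iterated integral of the density
   over C (Tonelli); the value is chosen by Hilbert's epsilon among the
   values of the (unique, when it exists) iterated integral. *)
Definition bvn_prob (sx sy rho : R) (C : R -> R -> Prop) : R :=
  epsilon (inhabits 0) (fun l =>
    exists h : R -> R,
      (forall x, improper_integral_R
                   (fun y => indic C x y * bvn_density sx sy rho x y) (h x)) /\
      improper_integral_R h l).

Definition sqdist (p : R * R) (x y : R) : R :=
  (fst p - x) ^ 2 + (snd p - y) ^ 2.

Definition C1 (a b : R * R) (x y : R) : Prop := sqdist a x y < sqdist b x y.
Definition C2 (a b : R * R) (x y : R) : Prop := sqdist a x y > sqdist b x y.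

Definition K (sx sy rho : R) (a b : R * R) : R :=
  if excluded_middle_informative (a = b) then fst a + snd a
  else (fst a + snd a) * bvn_prob sx sy rho (C1 a b)
       + (fst b + snd b) * bvn_prob sx sy rho (C2 a b).

Definition x2star (sx sy rho : R) : R :=
  sqrt (2 * PI * (sx ^ 2 + 2 * rho * sx * sy + sy ^ 2)) / 4.

Definition bstar (sx sy rho : R) : R * R := (x2star sx sy rho, x2star sx sy rho).
Definition astar (sx sy rho : R) : R * R := (- x2star sx sy rho, - x2star sx sy rho).

(* With b* = (c, c), the payoff is K(a, b* ) = (x1 + y1) P(C1) + 2c P(C2), where C1
   and C2 are the open half-planes on either side of the perpendicular bisector of
   a and b*.  Writing the normal density as a Gaussian in x times a Gaussian in
   y - m x, the inner integral over a half-plane is a Gaussian tail, so every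
   half-plane has a well-defined, strictly positive iterated integral; hence
   K <= 0 forces x1 + y1 < 0.  If moreover |a|^2 >= 2 c^2 = |b*|^2, the reflection
   through the origin maps C1 into C2 and the density is even, so P(C1) <= P(C2)
   and 0 >= K >= (x1 + y1 + 2c) P(C2), whence x1 + y1 <= -2c. *)

From Stdlib Require Import Reals Lra Classical ClassicalEpsilon.
From Coquelicot Require Import Coquelicot.
Open Scope R_scope.

Lemma ex_lub_approx (E : R -> Prop) (B v0 : R) :
  (forall v, E v -> v <= B) -> E v0 ->
  exists l, (forall v, E v -> v <= l) /\
    forall eps, 0 < eps -> exists v, E v /\ l - eps < v.
Proof.
  intros HB Hv0.
  destruct (completeness E (ex_intro _ B HB) (ex_intro _ v0 Hv0)) as [l [Hub Hlub]].
  exists l; split; [exact Hub|]. intros eps Heps.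
  apply NNPP; intro Hno.
  assert (l <= l - eps); [|lra].
  apply Hlub; intros v Hv. apply Rnot_lt_le; intro Hlt. apply Hno. now exists v.
Qed.

Lemma RInt_le_subinterval (f : R -> R) a c d b :
  (forall x, 0 <= f x) -> a <= c -> c <= d -> d <= b -> ex_RInt f a b ->
  RInt f c d <= RInt f a b.
Proof.
  intros Hf Hac Hcd Hdb Hab.
  assert (Had : ex_RInt f a d) by (apply (ex_RInt_Chasles_1 f a d b); [lra | exact Hab]).
  assert (Hdb' : ex_RInt f d b) by (apply (ex_RInt_Chasles_2 f a d b); [lra | exact Hab]).
  assert (Hac' : ex_RInt f a c) by (apply (ex_RInt_Chasles_1 f a c d); [lra | exact Had]).
  assert (Hcd' : ex_RInt f c d) by (apply (ex_RInt_Chasles_2 f a c d); [lra | exact Had]).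
  rewrite <- (RInt_Chasles f a d b Had Hdb'), <- (RInt_Chasles f a c d Hac' Hcd').
  assert (0 <= RInt f a c) by (apply RInt_ge_0; auto).
  assert (0 <= RInt f d b) by (apply RInt_ge_0; auto).
  unfold plus; simpl. lra.
Qed.

Definition is_improper_RInt (f : R -> R) (l : R) : Prop :=
  forall eps, 0 < eps -> exists M, 0 < M /\ forall a b, a <= - M -> M <= b ->
    ex_RInt f a b /\ Rabs (RInt f a b - l) < eps.

Lemma improper_integral_R_iff f l :
  improper_integral_R f l <-> is_improper_RInt f l.
Proof.
  split; intros H eps Heps; destruct (H eps Heps) as [M [HM HfM]];
    exists M; split; auto; intros a b Ha Hb; destruct (HfM a b Ha Hb) as [Hf Hl].
  - split; [exact (ex_RInt_Reals_1 _ _ _ Hf)|]. now rewrite (RInt_Reals _ _ _ Hf).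
  - exists (ex_RInt_Reals_0 _ _ _ Hf). now rewrite <- RInt_Reals.
Qed.

Lemma is_improper_RInt_le f g lf lg : (forall x, f x <= g x) ->
  is_improper_RInt f lf -> is_improper_RInt g lg -> lf <= lg.
Proof.
  intros Hfg Hf Hg. apply Rle_plus_epsilon; intros eps Heps.
  destruct (Hf (eps / 2)) as [M1 [HM1 Hf1]]; [lra|].
  destruct (Hg (eps / 2)) as [M2 [HM2 Hg2]]; [lra|].
  set (M := Rmax M1 M2). pose proof (Rmax_l M1 M2). pose proof (Rmax_r M1 M2).
  destruct (Hf1 (- M) M) as [Exf Af]; [unfold M; lra..|].
  destruct (Hg2 (- M) M) as [Exg Ag]; [unfold M; lra..|].
  assert (RInt f (- M) M <= RInt g (- M) M) by (apply RInt_le; auto; unfold M; lra).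
  apply Rabs_def2 in Af. apply Rabs_def2 in Ag. lra.
Qed.

Lemma is_improper_RInt_unique f l1 l2 :
  is_improper_RInt f l1 -> is_improper_RInt f l2 -> l1 = l2.
Proof.
  intros H1 H2. apply Rle_antisym; eapply is_improper_RInt_le; eauto; intro; apply Rle_refl.
Qed.

Lemma is_improper_RInt_approx f l c d eps : is_improper_RInt f l -> 0 < eps ->
  exists a b, a <= c /\ d <= b /\ ex_RInt f a b /\ Rabs (RInt f a b - l) < eps.
Proof.
  intros H Heps. destruct (H eps Heps) as [M [_ HM]].
  exists (Rmin (- M) c), (Rmax M d).
  repeat split; [apply Rmin_r | apply Rmax_r | apply HM; [apply Rmin_l | apply Rmax_l]..].
Qed.

Lemma RInt_le_improper f l c d : (forall x, 0 <= f x) -> c <= d ->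
  is_improper_RInt f l -> RInt f c d <= l.
Proof.
  intros Hf Hcd H. apply Rle_plus_epsilon; intros eps Heps.
  destruct (is_improper_RInt_approx f l c d eps H Heps) as [a [b [Ha [Hb [Hab Hl]]]]].
  pose proof (RInt_le_subinterval f a c d b Hf Ha Hcd Hb Hab).
  apply Rabs_def2 in Hl. lra.
Qed.

Lemma is_improper_RInt_ge0 f l : (forall x, 0 <= f x) -> is_improper_RInt f l -> 0 <= l.
Proof.
  intros Hf H. pose proof (RInt_le_improper f l 0 0 Hf (Rle_refl 0) H) as Hl.
  now rewrite RInt_point in Hl.
Qed.

Lemma is_improper_RInt_le_bound f l B : (forall a b, a <= b -> RInt f a b <= B) ->
  is_improper_RInt f l -> l <= B.
Proof.
  intros HB H. apply Rle_plus_epsilon; intros eps Heps.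
  destruct (is_improper_RInt_approx f l 0 0 eps H Heps) as [a [b [Ha [Hb [_ Hl]]]]].
  pose proof (HB a b ltac:(lra)). apply Rabs_def2 in Hl. lra.
Qed.

Lemma ex_improper_RInt_bounded f B : (forall x, 0 <= f x) -> (forall a b, ex_RInt f a b) ->
  (forall a b, a <= b -> RInt f a b <= B) -> exists l, is_improper_RInt f l.
Proof.
  intros Hf Hex HB.
  destruct (ex_lub_approx (fun v => exists a b, a <= b /\ v = RInt f a b) B (RInt f 0 0))
    as [l [Hub Happ]].
  { intros v [a [b [Hab ->]]]. auto. }
  { exists 0, 0; split; [lra | easy]. }
  exists l. intros eps Heps.
  destruct (Happ eps Heps) as [v [[a0 [b0 [Hab0 ->]]] Hv]].
  set (M := Rmax 1 (Rmax (- a0) b0)).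
  pose proof (Rmax_l 1 (Rmax (- a0) b0)). pose proof (Rmax_r 1 (Rmax (- a0) b0)).
  pose proof (Rmax_l (- a0) b0). pose proof (Rmax_r (- a0) b0).
  exists M; split; [unfold M; lra|]. intros a b Ha Hb. split; [apply Hex|].
  assert (RInt f a0 b0 <= RInt f a b) by (apply RInt_le_subinterval; auto; unfold M in *; lra).
  assert (RInt f a b <= l) by (apply Hub; exists a, b; split; [unfold M in *; lra | easy]).
  apply Rabs_def1; lra.
Qed.

Lemma is_improper_RInt_ext f g l : (forall x, f x = g x) ->
  is_improper_RInt f l -> is_improper_RInt g l.
Proof.
  intros Hfg H eps Heps. destruct (H eps Heps) as [M [HM HfM]]. exists M; split; auto.
  intros a b Ha Hb. destruct (HfM a b Ha Hb) as [Hex Hl].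
  split; [now apply (ex_RInt_ext f) | now rewrite <- (RInt_ext f)].
Qed.

Lemma is_improper_RInt_scal f l c :
  is_improper_RInt f l -> is_improper_RInt (fun x => c * f x) (c * l).
Proof.
  intros H eps Heps.
  assert (Hc : 0 < Rabs c + 1) by (pose proof (Rabs_pos c); lra).
  destruct (H (eps / (Rabs c + 1))) as [M [HM HfM]]; [now apply Rdiv_lt_0_compat|].
  exists M; split; auto. intros a b Ha Hb. destruct (HfM a b Ha Hb) as [Hex Hl].
  split; [exact (ex_RInt_scal f a b c Hex)|].
  replace (RInt (fun x => c * f x) a b) with (c * RInt f a b)
    by (symmetry; exact (RInt_scal f a b c Hex)).
  replace (c * RInt f a b - c * l) with (c * (RInt f a b - l)) by ring.
  rewrite Rabs_mult.
  apply Rle_lt_trans with (Rabs c * (eps / (Rabs c + 1))).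
  - apply Rmult_le_compat_l; [apply Rabs_pos | lra].
  - apply (Rmult_lt_reg_r (Rabs c + 1)); [exact Hc|].
    field_simplify; [|lra]. pose proof (Rabs_pos c). nra.
Qed.
Lemma is_improper_RInt_shift f l s :
  is_improper_RInt f l -> is_improper_RInt (fun x => f (x - s)) l.
Proof.
  intros H eps Heps. destruct (H eps Heps) as [M [HM HfM]].
  pose proof (Rabs_pos s). pose proof (Rle_abs s). pose proof (Rle_abs (- s)).
  rewrite Rabs_Ropp in *.
  exists (M + Rabs s); split; [lra|]. intros a b Ha Hb.
  assert (Ha' : a - s <= - M) by lra. assert (Hb' : M <= b - s) by lra.
  destruct (HfM (a - s) (b - s) Ha' Hb') as [Hex Hl].
  assert (Hex' : ex_RInt f (1 * a + - s) (1 * b + - s))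
    by (replace (1 * a + - s) with (a - s) by ring; replace (1 * b + - s) with (b - s) by ring;
        exact Hex).
  assert (Hfs : forall x, 1 * f (1 * x + - s) = f (x - s))
    by (intro x; rewrite Rmult_1_l; f_equal; ring).
  split.
  - apply (ex_RInt_ext (fun x => 1 * f (1 * x + - s))); [intros; apply Hfs|].
    exact (@ex_RInt_comp_lin R_NormedModule f 1 (- s) a b Hex').
  - rewrite <- (RInt_ext (fun x => 1 * f (1 * x + - s))) by (intros; apply Hfs).
    replace (RInt (fun x => 1 * f (1 * x + - s)) a b) with (RInt f (1 * a + - s) (1 * b + - s))
      by (symmetry; exact (@RInt_comp_lin R_CompleteNormedModule f 1 (- s) a b Hex')).
    replace (1 * a + - s) with (a - s) by ring; replace (1 * b + - s) with (b - s) by ring.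
    exact Hl.
Qed.

Lemma is_improper_RInt_comp_opp f l :
  is_improper_RInt f l -> is_improper_RInt (fun x => f (- x)) l.
Proof.
  intros H eps Heps. destruct (H eps Heps) as [M [HM HfM]]. exists M; split; auto.
  intros a b Ha Hb.
  assert (Ha' : - b <= - M) by lra. assert (Hb' : M <= - a) by lra.
  destruct (HfM (- b) (- a) Ha' Hb') as [Hex Hl].
  assert (Hopp : is_RInt (fun x => f (- x)) a b (RInt f (- b) (- a))).
  { pose proof (@RInt_correct R_CompleteNormedModule f _ _ Hex) as Hf.
    pose proof (@is_RInt_opp R_NormedModule _ a b _
                  (@is_RInt_comp_opp R_NormedModule f a b _ (@is_RInt_swap R_NormedModule f _ _ _ Hf)))
      as Hff.
    apply (@is_RInt_ext R_NormedModule (fun x => opp (opp (f (- x))))).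
    - intros; apply opp_opp.
    - rewrite <- (opp_opp (RInt f (- b) (- a))). exact Hff. }
  split; [now exists (RInt f (- b) (- a)) | now rewrite (is_RInt_unique _ _ _ _ Hopp)].
Qed.

Definition is_RInt_0_pinfty (f : R -> R) (L : R) : Prop :=
  forall eps, 0 < eps -> exists M, forall b, M <= b -> Rabs (RInt f 0 b - L) < eps.

Lemma ex_RInt_0_pinfty_bounded f B : (forall x, 0 <= f x) -> (forall a b, ex_RInt f a b) ->
  (forall b, 0 <= b -> RInt f 0 b <= B) -> exists L, is_RInt_0_pinfty f L.
Proof.
  intros Hf Hex HB.
  destruct (ex_lub_approx (fun v => exists b, 0 <= b /\ v = RInt f 0 b) B (RInt f 0 0))
    as [L [Hub Happ]].
  { intros v [b [Hb ->]]. auto. }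
  { exists 0; split; [lra | easy]. }
  exists L. intros eps Heps.
  destruct (Happ eps Heps) as [v [[b0 [Hb0 ->]] Hv]].
  exists b0. intros b Hb.
  assert (RInt f 0 b0 <= RInt f 0 b) by (apply RInt_le_subinterval; auto; lra).
  assert (RInt f 0 b <= L) by (apply Hub; exists b; split; [lra | easy]).
  apply Rabs_def1; lra.
Qed.

Definition restr_gt (c : R) (f : R -> R) (y : R) : R := if Rlt_dec c y then f y else 0.

Section RestrGt.

Variables (f : R -> R) (c : R).
Hypothesis f_cont : forall y, continuous f y.

Lemma is_RInt_restr_gt a b : a <= c <= b -> is_RInt (restr_gt c f) a b (RInt f c b).
Proof.
  intros Hc.
  assert (Hlo : is_RInt (restr_gt c f) a c 0).
  { apply (is_RInt_ext (fun _ => 0)).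
    - intros y Hy. rewrite Rmin_left, Rmax_right in Hy by lra.
      unfold restr_gt. destruct (Rlt_dec c y); [lra | easy].
    - pose proof (is_RInt_const a c 0) as H0. unfold scal in H0; simpl in H0.
      unfold mult in H0; simpl in H0. now rewrite Rmult_0_r in H0. }
  assert (Hhi : is_RInt (restr_gt c f) c b (RInt f c b)).
  { apply (is_RInt_ext f).
    - intros y Hy. rewrite Rmin_left, Rmax_right in Hy by lra.
      unfold restr_gt. destruct (Rlt_dec c y); [easy | lra].
    - apply (@RInt_correct R_CompleteNormedModule), ex_RInt_continuous. intros; apply f_cont. }
  pose proof (is_RInt_Chasles _ a c b _ _ Hlo Hhi) as H.
  unfold plus in H; simpl in H. now rewrite Rplus_0_l in H.
Qed.

Lemma ex_RInt_restr_gt a b : ex_RInt (restr_gt c f) a b.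
Proof.
  assert (Hle : forall a b, a <= b -> ex_RInt (restr_gt c f) a b).
  { clear a b. intros a b Hab.
    set (a' := Rmin a c). set (b' := Rmax b c).
    pose proof (Rmin_l a c). pose proof (Rmin_r a c). pose proof (Rmax_l b c). pose proof (Rmax_r b c).
    assert (Hab' : ex_RInt (restr_gt c f) a' b')
      by (exists (RInt f c b'); apply is_RInt_restr_gt; unfold a', b'; lra).
    apply (@ex_RInt_Chasles_2 R_CompleteNormedModule _ a' a b); [unfold a'; lra|].
    apply (@ex_RInt_Chasles_1 R_CompleteNormedModule _ a' b b'); [unfold a', b'; lra | exact Hab']. }
  destruct (Rle_lt_dec a b); [auto|]. apply (@ex_RInt_swap R_NormedModule), Hle; lra.
Qed.

Lemma is_improper_RInt_restr_gt L :
  is_RInt_0_pinfty f L -> is_improper_RInt (restr_gt c f) (RInt f c 0 + L).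
Proof.
  intros HL eps Heps. destruct (HL eps Heps) as [M0 HM0].
  pose proof (Rabs_pos c). pose proof (Rabs_pos M0). pose proof (Rle_abs c).
  pose proof (Rle_abs (- c)). pose proof (Rle_abs M0). rewrite Rabs_Ropp in *.
  exists (Rabs c + Rabs M0 + 1); split; [lra|]. intros a b Ha Hb.
  assert (Hc : a <= c <= b) by lra.
  pose proof (is_RInt_restr_gt a b Hc) as Hstep.
  split; [now exists (RInt f c b)|].
  rewrite (is_RInt_unique _ _ _ _ Hstep).
  assert (Hex : forall u v, ex_RInt f u v) by (intros; apply (@ex_RInt_continuous R_CompleteNormedModule); intros; apply f_cont).
  rewrite <- (RInt_Chasles f c 0 b (Hex _ _) (Hex _ _)). unfold plus; simpl.
  replace (RInt f c 0 + RInt f 0 b - (RInt f c 0 + L)) with (RInt f 0 b - L) by ring.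
  apply HM0. lra.
Qed.

End RestrGt.

Definition gauss (k t : R) : R := exp (- k * t ^ 2).

Section Gauss.

Variable k : R.
Hypothesis k_pos : 0 < k.

Lemma gauss_pos t : 0 < gauss k t.
Proof. apply exp_pos. Qed.

Lemma gauss_opp t : gauss k (- t) = gauss k t.
Proof. unfold gauss. f_equal. ring. Qed.

Lemma continuous_gauss t : continuous (gauss k) t.
Proof. apply (@ex_derive_continuous R_AbsRing R_NormedModule). unfold gauss. auto_derive. easy. Qed.

Lemma ex_RInt_gauss a b : ex_RInt (gauss k) a b.
Proof. apply (@ex_RInt_continuous R_CompleteNormedModule). intros; apply continuous_gauss. Qed.

(* From [exp u >= 1 + u]; the right-hand side integrates to an arctangent. *)
Lemma gauss_le_Cauchy t : gauss k t <= (1 + / k) * / (1 + t ^ 2).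
Proof.
  unfold gauss. pose proof (pow2_ge_0 t) as Ht.
  assert (Hkt : 0 <= k * t ^ 2) by (apply Rmult_le_pos; lra).
  replace (- k * t ^ 2) with (- (k * t ^ 2)) by ring. rewrite exp_Ropp.
  apply Rle_trans with (/ (1 + k * t ^ 2)).
  - apply Rinv_le_contravar; [lra | apply exp_ineq1_le].
  - assert (0 < / k) by (apply Rinv_0_lt_compat; lra).
    apply (Rmult_le_reg_r ((1 + k * t ^ 2) * (1 + t ^ 2))); [apply Rmult_lt_0_compat; lra|].
    replace (/ (1 + k * t ^ 2) * ((1 + k * t ^ 2) * (1 + t ^ 2))) with (1 + t ^ 2) by (field; lra).
    replace ((1 + / k) * / (1 + t ^ 2) * ((1 + k * t ^ 2) * (1 + t ^ 2)))
      with (1 + k * t ^ 2 + / k + t ^ 2) by (field; lra).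
    nra.
Qed.

Lemma is_RInt_Cauchy a b : is_RInt (fun t => / (1 + t ^ 2)) a b (atan b - atan a).
Proof.
  apply (@is_RInt_derive R_CompleteNormedModule atan).
  - intros x _. apply is_derive_Reals, derivable_pt_lim_atan.
  - intros x _. apply (@ex_derive_continuous R_AbsRing R_NormedModule). auto_derive. pose proof (pow2_ge_0 x). simpl. nra.
Qed.

Lemma RInt_gauss_le a b : a <= b -> RInt (gauss k) a b <= (1 + / k) * PI.
Proof.
  intros Hab.
  assert (Hc : is_RInt (fun t => (1 + / k) * / (1 + t ^ 2)) a b ((1 + / k) * (atan b - atan a)))
    by exact (@is_RInt_scal R_NormedModule _ a b (1 + / k) _ (is_RInt_Cauchy a b)).
  assert (0 < / k) by (apply Rinv_0_lt_compat; lra).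
  pose proof (atan_bound a). pose proof (atan_bound b).
  apply Rle_trans with ((1 + / k) * (atan b - atan a)).
  - rewrite <- (is_RInt_unique _ _ _ _ Hc). apply RInt_le; auto.
    + apply ex_RInt_gauss.
    + now exists ((1 + / k) * (atan b - atan a)).
    + intros; apply gauss_le_Cauchy.
  - apply Rmult_le_compat_l; lra.
Qed.

Lemma ex_RInt_0_pinfty_gauss : exists L, is_RInt_0_pinfty (gauss k) L.
Proof.
  apply (ex_RInt_0_pinfty_bounded _ ((1 + / k) * PI)).
  - intros; left; apply gauss_pos.
  - apply ex_RInt_gauss.
  - intros; apply RInt_gauss_le; auto.
Qed.

Lemma ex_improper_RInt_gauss : exists T, is_improper_RInt (gauss k) T /\ 0 < T.
Proof.
  destruct (ex_improper_RInt_bounded (gauss k) ((1 + / k) * PI)) as [T HT].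
  - intros; left; apply gauss_pos.
  - apply ex_RInt_gauss.
  - intros; apply RInt_gauss_le; auto.
  - exists T; split; auto.
    apply Rlt_le_trans with (RInt (gauss k) 0 1).
    + apply RInt_gt_0; [lra | intros; apply gauss_pos | intros; apply continuous_gauss].
    + apply RInt_le_improper; auto; [intros; left; apply gauss_pos | lra].
Qed.

Lemma gauss_tail_bounds L v : is_RInt_0_pinfty (gauss k) L ->
  0 < RInt (gauss k) v 0 + L <= (1 + / k) * PI.
Proof.
  intros HL.
  pose proof (is_improper_RInt_restr_gt _ v continuous_gauss L HL) as Htail.
  assert (Hnn : forall y, 0 <= restr_gt v (gauss k) y).
  { intro y. unfold restr_gt. destruct (Rlt_dec v y); [left; apply gauss_pos | lra]. }
  split.
  - apply Rlt_le_trans with (RInt (restr_gt v (gauss k)) v (v + 1)); [|apply RInt_le_improper; auto; lra].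
    rewrite (is_RInt_unique _ _ _ _ (is_RInt_restr_gt _ v continuous_gauss v (v + 1) ltac:(lra))).
    apply RInt_gt_0; [lra | intros; apply gauss_pos | intros; apply continuous_gauss].
  - apply (is_improper_RInt_le_bound (restr_gt v (gauss k))); [intros a b Hab | exact Htail].
    set (a' := Rmin a v). set (b' := Rmax b v).
    pose proof (Rmin_l a v). pose proof (Rmin_r a v). pose proof (Rmax_l b v). pose proof (Rmax_r b v).
    pose proof (is_RInt_restr_gt _ v continuous_gauss a' b' ltac:(unfold a', b'; lra)) as Hab'.
    apply Rle_trans with (RInt (restr_gt v (gauss k)) a' b').
    + apply RInt_le_subinterval;
        [exact Hnn | unfold a'; lra | exact Hab | unfold b'; lra | now exists (RInt (gauss k) v b')].
    + rewrite (is_RInt_unique _ _ _ _ Hab'). apply RInt_gauss_le. unfold b'; lra.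
Qed.

Lemma continuous_RInt_gauss_lower b v : continuous (fun u => RInt (gauss k) u b) v.
Proof.
  apply (continuous_RInt_2 (gauss k) v b).
  apply filter_forall. intro z. apply (@RInt_correct R_CompleteNormedModule), ex_RInt_gauss.
Qed.

Lemma ex_improper_RInt_dominated_gauss h C : (forall a b, ex_RInt h a b) ->
  (forall x, 0 <= h x <= C * gauss k x) -> exists l, is_improper_RInt h l.
Proof.
  intros Hex Hh.
  assert (HC : 0 <= C).
  { destruct (Hh 0). pose proof (gauss_pos 0). nra. }
  apply (ex_improper_RInt_bounded h (C * ((1 + / k) * PI))); [intro x; apply Hh | exact Hex|].
  intros a b Hab.
  assert (Hg : ex_RInt (fun x => C * gauss k x) a b) by exact (ex_RInt_scal _ a b C (ex_RInt_gauss a b)).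
  apply Rle_trans with (RInt (fun x => C * gauss k x) a b).
  - apply RInt_le; auto. intros; apply Hh.
  - replace (RInt (fun x => C * gauss k x) a b) with (C * RInt (gauss k) a b)
      by (symmetry; exact (RInt_scal _ a b C (ex_RInt_gauss a b))).
    apply Rmult_le_compat_l; [exact HC | now apply RInt_gauss_le].
Qed.

End Gauss.

Definition is_iterated_RInt (C : R -> R -> Prop) (d : R -> R -> R) (l : R) : Prop :=
  exists h : R -> R,
    (forall x, is_improper_RInt (fun y => indic C x y * d x y) (h x)) /\ is_improper_RInt h l.

Lemma is_iterated_RInt_le A B d l1 l2 : (forall x y, 0 <= d x y) ->
  (forall x y, A x y -> B x y) -> is_iterated_RInt A d l1 -> is_iterated_RInt B d l2 -> l1 <= l2.
Proof.
  intros Hd HAB [h1 [Hin1 Hout1]] [h2 [Hin2 Hout2]].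
  apply (is_improper_RInt_le h1 h2); auto. intro x.
  refine (is_improper_RInt_le _ _ _ _ _ (Hin1 x) (Hin2 x)); intro y.
  pose proof (Hd x y). unfold indic.
  destruct (excluded_middle_informative (A x y)) as [a|a];
    destruct (excluded_middle_informative (B x y)) as [b|b]; try lra.
  exfalso; auto.
Qed.

Lemma is_iterated_RInt_unique C d l1 l2 :
  is_iterated_RInt C d l1 -> is_iterated_RInt C d l2 -> l1 = l2.
Proof.
  intros [h1 [Hin1 Hout1]] [h2 [Hin2 Hout2]].
  apply (is_improper_RInt_unique h2); auto.
  apply (is_improper_RInt_ext h1); auto.
  intro x. exact (is_improper_RInt_unique _ _ _ (Hin1 x) (Hin2 x)).
Qed.

Lemma is_iterated_RInt_ge0 C d l : (forall x y, 0 <= d x y) -> is_iterated_RInt C d l -> 0 <= l.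
Proof.
  intros Hd [h [Hin Hout]]. apply (is_improper_RInt_ge0 h); auto. intro x.
  refine (is_improper_RInt_ge0 _ _ _ (Hin x)); intro y.
  pose proof (Hd x y). unfold indic. destruct (excluded_middle_informative (C x y)); lra.
Qed.

Lemma is_iterated_RInt_ext A B d l : (forall x y, A x y <-> B x y) ->
  is_iterated_RInt A d l -> is_iterated_RInt B d l.
Proof.
  intros HAB [h [Hin Hout]]. exists h; split; [|exact Hout]. intro x.
  apply (is_improper_RInt_ext (fun y => indic A x y * d x y)); [intro y | exact (Hin x)].
  unfold indic.
  destruct (excluded_middle_informative (A x y)) as [a|a];
    destruct (excluded_middle_informative (B x y)) as [b|b]; try reflexivity;
    exfalso; [apply b | apply a]; apply HAB; assumption.
Qed.

Lemma is_iterated_RInt_comp_opp C d l : (forall x y, d (- x) (- y) = d x y) ->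
  is_iterated_RInt C d l -> is_iterated_RInt (fun x y => C (- x) (- y)) d l.
Proof.
  intros Hd [h [Hin Hout]]. exists (fun x => h (- x)); split.
  - intro x. apply (is_improper_RInt_ext (fun y => indic C (- x) (- y) * d (- x) (- y))).
    + intro y. now rewrite Hd.
    + exact (is_improper_RInt_comp_opp _ _ (Hin (- x))).
  - now apply is_improper_RInt_comp_opp.
Qed.

Lemma bvn_prob_of_iterated sx sy rho C l :
  is_iterated_RInt C (bvn_density sx sy rho) l -> bvn_prob sx sy rho C = l.
Proof.
  intros HC. unfold bvn_prob.
  apply (is_iterated_RInt_unique C (bvn_density sx sy rho)); [|exact HC].
  match goal with |- is_iterated_RInt _ _ (epsilon _ ?P) =>
    assert (HP : exists l, P l) end.
  { exists l. destruct HC as [h [Hin Hout]]. exists h.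
    split; [intro x|]; apply improper_integral_R_iff; auto. }
  destruct (epsilon_spec (inhabits 0) _ HP) as [h [Hin Hout]].
  exists h. split; [intro x|]; apply improper_integral_R_iff; auto.
Qed.

Definition halfplane (p q r x y : R) : Prop := 0 < p * x + q * y + r.

Section FactorizedDensity.

Variables (d : R -> R -> R) (A k1 k2 m : R).
Hypotheses (A_pos : 0 < A) (k1_pos : 0 < k1) (k2_pos : 0 < k2).
Hypothesis d_factor : forall x y, d x y = A * gauss k1 x * gauss k2 (y - m * x).

Lemma density_ge0 x y : 0 <= d x y.
Proof.
  rewrite d_factor. pose proof (gauss_pos k1 x). pose proof (gauss_pos k2 (y - m * x)).
  left; repeat apply Rmult_lt_0_compat; auto.
Qed.

Lemma density_opp x y : d (- x) (- y) = d x y.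
Proof.
  rewrite !d_factor, gauss_opp. replace (- y - m * - x) with (- (y - m * x)) by ring.
  now rewrite gauss_opp.
Qed.

Lemma is_improper_RInt_halfplane_section p q r L x : 0 < q -> is_RInt_0_pinfty (gauss k2) L ->
  is_improper_RInt (fun y => indic (halfplane p q r) x y * d x y)
    (A * gauss k1 x * (RInt (gauss k2) (- (p * x + r) / q - m * x) 0 + L)).
Proof.
  intros Hq HL. set (c := - (p * x + r) / q - m * x).
  apply (is_improper_RInt_ext (fun y => A * gauss k1 x * restr_gt c (gauss k2) (y - m * x))).
  - intro y. rewrite d_factor. unfold indic, restr_gt, halfplane.
    assert (Hpq : p * x + q * y + r = q * ((y - m * x) - c)) by (unfold c; field; lra).
    destruct (excluded_middle_informative (0 < p * x + q * y + r)) as [H|H];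
      destruct (Rlt_dec c (y - m * x)) as [H'|H']; rewrite Hpq in H; try ring;
      exfalso; nra.
  - apply is_improper_RInt_scal, is_improper_RInt_shift.
    exact (is_improper_RInt_restr_gt _ c (continuous_gauss k2) L HL).
Qed.

Lemma is_iterated_RInt_halfplane_qpos p q r : 0 < q ->
  exists l, is_iterated_RInt (halfplane p q r) d l /\ 0 < l.
Proof.
  intros Hq. destruct (ex_RInt_0_pinfty_gauss k2 k2_pos) as [L HL].
  set (c := fun x => - (p * x + r) / q - m * x).
  set (h := fun x => A * gauss k1 x * (RInt (gauss k2) (c x) 0 + L)).
  assert (Hcont : forall x, continuous h x).
  { intro x. apply (continuous_mult (fun x => A * gauss k1 x)).
    - apply (continuous_mult (fun _ => A)); [apply continuous_const | apply continuous_gauss].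
    - apply (continuous_plus (fun x => RInt (gauss k2) (c x) 0) (fun _ => L)); [|apply continuous_const].
      apply (continuous_comp c (fun u => RInt (gauss k2) u 0)); [|apply continuous_RInt_gauss_lower].
      apply (@ex_derive_continuous R_AbsRing R_NormedModule). unfold c. auto_derive. lra. }
  assert (Hbound : forall x, 0 < h x <= A * ((1 + / k2) * PI) * gauss k1 x).
  { intro x. pose proof (gauss_pos k1 x).
    destruct (gauss_tail_bounds k2 k2_pos L (c x) HL). unfold h.
    split; [repeat apply Rmult_lt_0_compat; auto|].
    replace (A * ((1 + / k2) * PI) * gauss k1 x) with (A * gauss k1 x * ((1 + / k2) * PI)) by ring.
    apply Rmult_le_compat_l; [left; apply Rmult_lt_0_compat | ]; auto. }
  destruct (ex_improper_RInt_dominated_gauss k1 k1_pos h (A * ((1 + / k2) * PI))) as [l Hl].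
  - intros a b. apply (@ex_RInt_continuous R_CompleteNormedModule). intros; apply Hcont.
  - intro x. destruct (Hbound x); split; lra.
  - exists l; split.
    + exists h; split; [intro x; now apply is_improper_RInt_halfplane_section | exact Hl].
    + apply Rlt_le_trans with (RInt h 0 1).
      * apply RInt_gt_0; [lra | intros; apply Hbound | intros; apply Hcont].
      * apply RInt_le_improper; [intro x; left; apply Hbound | lra | exact Hl].
Qed.

Lemma is_iterated_RInt_halfplane_vertical p r : 0 < p ->
  exists l, is_iterated_RInt (halfplane p 0 r) d l /\ 0 < l.
Proof.
  intros Hp. destruct (ex_improper_RInt_gauss k2 k2_pos) as [T [HT HT0]].
  set (c := - r / p). set (G := fun x => A * gauss k1 x * T). set (h := restr_gt c G).
  assert (HGcont : forall x, continuous G x).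
  { intro x. apply (continuous_mult (fun x => A * gauss k1 x)); [|apply continuous_const].
    apply (continuous_mult (fun _ => A)); [apply continuous_const | apply continuous_gauss]. }
  assert (Hsection : forall x, is_improper_RInt (fun y => indic (halfplane p 0 r) x y * d x y) (h x)).
  { intro x. assert (Hx : p * x + r = p * (x - c)) by (unfold c; field; lra).
    unfold h, restr_gt, G. destruct (Rlt_dec c x) as [Hcx|Hcx].
    - apply (is_improper_RInt_ext (fun y => A * gauss k1 x * gauss k2 (y - m * x))).
      + intro y. rewrite d_factor. unfold indic, halfplane.
        destruct (excluded_middle_informative (0 < p * x + 0 * y + r)); [ring | nra].
      + apply is_improper_RInt_scal, is_improper_RInt_shift, HT.
    - pose proof (is_improper_RInt_scal _ _ 0 HT) as H0. rewrite Rmult_0_l in H0.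
      apply (is_improper_RInt_ext (fun y => 0 * gauss k2 y)); [|exact H0].
      intro y. unfold indic, halfplane.
      destruct (excluded_middle_informative (0 < p * x + 0 * y + r)); [nra | ring]. }
  destruct (ex_improper_RInt_dominated_gauss k1 k1_pos h (A * T)) as [l Hl].
  - apply ex_RInt_restr_gt, HGcont.
  - intro x. pose proof (gauss_pos k1 x). unfold h, restr_gt, G.
    destruct (Rlt_dec c x); split.
    + left; repeat apply Rmult_lt_0_compat; auto.
    + right; ring.
    + lra.
    + left; repeat apply Rmult_lt_0_compat; auto.
  - exists l; split; [now exists h|].
    apply Rlt_le_trans with (RInt h c (c + 1)).
    + unfold h. rewrite (is_RInt_unique _ _ _ _ (is_RInt_restr_gt G c HGcont c (c + 1) ltac:(lra))).
      apply RInt_gt_0; [lra | | intros; apply HGcont].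
      intros x _. pose proof (gauss_pos k1 x). unfold G. repeat apply Rmult_lt_0_compat; auto.
    + apply RInt_le_improper; [| lra | exact Hl].
      intro x. pose proof (gauss_pos k1 x). unfold h, restr_gt, G.
      destruct (Rlt_dec c x); [repeat apply Rmult_le_pos; lra | lra].
Qed.

Lemma is_iterated_RInt_halfplane_opp p q r l :
  is_iterated_RInt (halfplane (- p) (- q) r) d l -> is_iterated_RInt (halfplane p q r) d l.
Proof.
  intros H. apply (is_iterated_RInt_ext (fun x y => halfplane (- p) (- q) r (- x) (- y))).
  - intros x y. unfold halfplane. now replace (- p * - x + - q * - y + r) with (p * x + q * y + r) by ring.
  - now apply is_iterated_RInt_comp_opp; [apply density_opp|].
Qed.

Lemma is_iterated_RInt_halfplane p q r : p <> 0 \/ q <> 0 ->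
  exists l, is_iterated_RInt (halfplane p q r) d l /\ 0 < l.
Proof.
  intros Hpq.
  assert (Hopp : forall p q, (exists l, is_iterated_RInt (halfplane (- p) (- q) r) d l /\ 0 < l) ->
                  exists l, is_iterated_RInt (halfplane p q r) d l /\ 0 < l).
  { intros p' q' [l [Hl Hl0]]. exists l; split; [now apply is_iterated_RInt_halfplane_opp | exact Hl0]. }
  destruct (Rtotal_order q 0) as [Hq | [-> | Hq]].
  - apply Hopp, is_iterated_RInt_halfplane_qpos; lra.
  - destruct (Rtotal_order p 0) as [Hp | [Hp | Hp]]; [| destruct Hpq; lra |].
    + apply Hopp. rewrite Ropp_0. apply is_iterated_RInt_halfplane_vertical; lra.
    + now apply is_iterated_RInt_halfplane_vertical.
  - now apply is_iterated_RInt_halfplane_qpos.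
Qed.

Lemma is_iterated_RInt_halfplane_le_opp p q r r' l1 l2 : r <= r' ->
  is_iterated_RInt (halfplane p q r) d l1 -> is_iterated_RInt (halfplane (- p) (- q) r') d l2 ->
  l1 <= l2.
Proof.
  intros Hr H1 H2.
  apply (is_iterated_RInt_le (fun x y => halfplane p q r (- x) (- y)) (halfplane (- p) (- q) r')
           d l1 l2 density_ge0).
  - unfold halfplane. intros x y Hxy. lra.
  - now apply is_iterated_RInt_comp_opp; [apply density_opp|].
  - exact H2.
Qed.

End FactorizedDensity.

(* Completing the square in [y] splits the exponent into a Gaussian in [x]
   and a Gaussian in [y - rho sy / sx * x]. *)
Lemma bvn_density_gauss_factor sx sy rho : 0 < sx -> 0 < sy -> rho ^ 2 < 1 ->
  exists A k1 k2 m, 0 < A /\ 0 < k1 /\ 0 < k2 /\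
    forall x y, bvn_density sx sy rho x y = A * gauss k1 x * gauss k2 (y - m * x).
Proof.
  intros Hsx Hsy Hrho. pose proof PI_RGT_0.
  assert (Hs : 0 < sqrt (1 - rho ^ 2)) by (apply sqrt_lt_R0; lra).
  exists (/ (2 * PI * sx * sy * sqrt (1 - rho ^ 2))), (/ (2 * sx ^ 2)),
         (/ (2 * sy ^ 2 * (1 - rho ^ 2))), (rho * sy / sx).
  repeat split.
  - apply Rinv_0_lt_compat, Rmult_lt_0_compat; [|exact Hs].
    assert (0 < sx * sy) by nra. nra.
  - apply Rinv_0_lt_compat. assert (0 < sx ^ 2) by (apply pow_lt; lra). lra.
  - apply Rinv_0_lt_compat. assert (0 < sy ^ 2) by (apply pow_lt; lra).
    apply Rmult_lt_0_compat; lra.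
  - intros x y. unfold bvn_density, gauss.
    rewrite (Rmult_assoc (/ (2 * PI * sx * sy * sqrt (1 - rho ^ 2)))), <- exp_plus.
    do 2 f_equal. field. repeat split; lra.
Qed.

Lemma x2star_pos sx sy rho : 0 < sx -> 0 < sy -> rho ^ 2 < 1 -> 0 < x2star sx sy rho.
Proof.
  intros Hsx Hsy Hrho. unfold x2star. pose proof PI_RGT_0.
  assert (0 < sx ^ 2 + 2 * rho * sx * sy + sy ^ 2).
  { replace (sx ^ 2 + 2 * rho * sx * sy + sy ^ 2) with ((sx + rho * sy) ^ 2 + (1 - rho ^ 2) * sy ^ 2)
      by ring.
    pose proof (pow2_ge_0 (sx + rho * sy)). assert (0 < sy ^ 2) by (apply pow_lt; lra). nra. }
  assert (0 < sqrt (2 * PI * (sx ^ 2 + 2 * rho * sx * sy + sy ^ 2))) by (apply sqrt_lt_R0; nra).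
  lra.
Qed.

Lemma C1_halfplane a b x y : C1 a b x y <->
  halfplane (2 * (fst a - fst b)) (2 * (snd a - snd b))
    (fst b ^ 2 + snd b ^ 2 - fst a ^ 2 - snd a ^ 2) x y.
Proof. unfold C1, sqdist, halfplane. split; intro; nra. Qed.

Lemma C2_halfplane a b x y : C2 a b x y <->
  halfplane (- (2 * (fst a - fst b))) (- (2 * (snd a - snd b)))
    (- (fst b ^ 2 + snd b ^ 2 - fst a ^ 2 - snd a ^ 2)) x y.
Proof. unfold C2, sqdist, halfplane. split; intro; nra. Qed.

Lemma bvn_prob_C1_C2 sx sy rho a b : 0 < sx -> 0 < sy -> rho ^ 2 < 1 -> a <> b ->
  0 <= bvn_prob sx sy rho (C1 a b) /\ 0 < bvn_prob sx sy rho (C2 a b) /\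
  (fst b ^ 2 + snd b ^ 2 <= fst a ^ 2 + snd a ^ 2 ->
   bvn_prob sx sy rho (C1 a b) <= bvn_prob sx sy rho (C2 a b)).
Proof.
  intros Hsx Hsy Hrho Hab.
  destruct (bvn_density_gauss_factor sx sy rho Hsx Hsy Hrho) as [A [k1 [k2 [m [HA [Hk1 [Hk2 Hd]]]]]]].
  set (p := 2 * (fst a - fst b)). set (q := 2 * (snd a - snd b)).
  set (r := fst b ^ 2 + snd b ^ 2 - fst a ^ 2 - snd a ^ 2).
  assert (Hpq : p <> 0 \/ q <> 0).
  { destruct a as [a1 a2], b as [b1 b2]. unfold p, q; simpl.
    destruct (Req_dec a1 b1) as [->|]; [right | left; lra]. intro. apply Hab. f_equal; lra. }
  destruct (is_iterated_RInt_halfplane _ A k1 k2 m HA Hk1 Hk2 Hd p q r Hpq) as [l1 [H1 _]].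
  destruct (is_iterated_RInt_halfplane _ A k1 k2 m HA Hk1 Hk2 Hd (- p) (- q) (- r)) as [l2 [H2 Hl2]].
  { destruct Hpq; [left | right]; lra. }
  rewrite (bvn_prob_of_iterated _ _ _ _ l1),  (bvn_prob_of_iterated _ _ _ _ l2).
  - repeat split; [exact (is_iterated_RInt_ge0 _ _ _ (density_ge0 _ _ _ _ _ HA Hd) H1) | exact Hl2 |].
    intros Hba. apply (is_iterated_RInt_halfplane_le_opp _ _ _ _ _ HA Hd p q r (- r)); auto.
    unfold r; lra.
  - apply (is_iterated_RInt_ext _ _ _ _ (fun x y => iff_sym (C2_halfplane a b x y)) H2).
  - apply (is_iterated_RInt_ext _ _ _ _ (fun x y => iff_sym (C1_halfplane a b x y)) H1).
Qed.

Theorem mainTheorem9 (sx sy rho : R) (hsx : 0 < sx) (hsy : 0 < sy)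
  (hrho0 : 0 < rho) (hrho1 : rho < 1) (x1 y1 : R)
  (hne : (x1, y1) <> astar sx sy rho)
  (hK : K sx sy rho (x1, y1) (bstar sx sy rho) <= 0) :
  x1 + y1 < 0 /\
  (x1 ^ 2 + y1 ^ 2 < 2 * (x2star sx sy rho) ^ 2 \/
   x1 + y1 <= - 2 * x2star sx sy rho).
Proof.
  assert (Hrho : rho ^ 2 < 1) by nra.
  pose proof (x2star_pos sx sy rho hsx hsy Hrho) as Hc.
  set (c := x2star sx sy rho) in *.
  unfold K, bstar in hK. fold c in hK.
  destruct (excluded_middle_informative ((x1, y1) = (c, c))) as [Heq | Hneq].
  { injection Heq as -> ->. simpl in hK. lra. }
  destruct (bvn_prob_C1_C2 sx sy rho _ _ hsx hsy Hrho Hneq) as [HP1 [HP2 HP12]].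
  simpl in hK, HP12.
  assert (Hsum : x1 + y1 < 0) by nra.
  split; [exact Hsum|].
  destruct (Rlt_or_le (x1 ^ 2 + y1 ^ 2) (2 * c ^ 2)) as [Hin | Hout]; [now left | right].
  specialize (HP12 ltac:(lra)). nra.
Qed.
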